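(* Let $G=(V,E)$ be a finite connected graph with $n=|V|\ge2$ vertices such that the equation $DK=n\mathbf{1}_n$ admits at least one solution $K\in\mathbb{R}^n$. Then the following are equivalent: (a) $G$ is antipodal; (b) $G$ is self-centered and Bonnet–Myers sharp.
   Context: All graphs are finite, simple, connected and undirected, with the combinatorial shortest-path distance $d$. For $V=\{v_1,\dots,v_n\}$, $D=(d(v_i,v_j))_{i,j=1}^n$ is the distance matrix and $\mathbf{1}_n$ the all-ones column vector. When $DK=n\mathbf{1}_n$ has solutions, the Steinerberger curvature is a solution $K$ for which $\min_iK_i$ is maximal among all solutions (the unique solution if there is only one). $G$ is Bonnet–Myers sharp if $DK=n\mathbf{1}_n$ has a solution and its Steinerberger curvature $K$ satisfies $\min_iK_i=2/\mathrm{diam}(G)$ (equivalently, some solution $K$ has $\min_i K_i=2/\mathrm{diam}(G)$). $G$ is self-centered if for every $x\in V$ there exists $\hat x\in V$ with $d(x,\hat x)=\mathrm{diam}(G)$. For $x,y\in V$ let $[x,y]=\{z\in V: d(x,y)=d(x,z)+d(z,y)\}$; $G$ is antipodal if for every $x\in V$ there exists $\hat x\in V$ with $[x,\hat x]=V$. *)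

From HB Require Import structures.
From mathcomp Require Import all_boot all_order all_algebra.
From mathcomp Require Import reals.
Set Implicit Arguments. Unset Strict Implicit. Unset Printing Implicit Defensive.
Import Order.TTheory GRing.Theory Num.Theory.
Local Open Scope ring_scope.

Definition simple_graph (T : finType) (e : rel T) : Prop :=
  symmetric e /\ irreflexive e.

Definition graph_connected (T : finType) (e : rel T) : Prop :=
  forall x y : T, connect e x y.

Definition walk_k (T : finType) (e : rel T) (k : nat) (x y : T) : bool :=
  [exists p : k.-tuple T, path e x p && (last x p == y)].

(* combinatorial shortest-path distance: least k admitting a walk of length
   k from x to y (for connected graphs it is always < #|T|). *)
Definition gdist (T : finType) (e : rel T) (x y : T) : nat :=
  find (fun k => walk_k e k x y) (iota 0 #|T|).

Definition diam (T : finType) (e : rel T) : nat :=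
  (\max_(x : T) \max_(y : T) gdist e x y)%N.

Definition curv_solution (R : realType) (T : finType) (e : rel T)
    (K : T -> R) : Prop :=
  forall i : T, (\sum_(j : T) (gdist e i j)%:R * K j) = (#|T|)%:R.

Definition minv (R : realType) (T : finType) (K : T -> R) : R :=
  match enum T with
  | [::] => 0
  | x :: _ => \big[Num.min/K x]_(i : T) K i
  end.

Definition steinerberger_curvature (R : realType) (T : finType) (e : rel T)
    (K : T -> R) : Prop :=
  curv_solution e K /\
  forall K' : T -> R, curv_solution e K' -> minv K' <= minv K.

Definition bonnet_myers_sharp (R : realType) (T : finType) (e : rel T) : Prop :=
  exists K : T -> R, steinerberger_curvature e K /\
    minv K = 2 / (diam e)%:R.

Definition self_centered (T : finType) (e : rel T) : Prop :=
  forall x : T, exists xh : T, gdist e x xh = diam e.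

Definition ginterval (T : finType) (e : rel T) (x y : T) : {set T} :=
  [set z | (gdist e x y == gdist e x z + gdist e z y)%N].

Definition antipodal (T : finType) (e : rel T) : Prop :=
  forall x : T, exists xh : T, ginterval e x xh = [set: T].

(* Summing the curvature equations of two vertices x and y gives
   sum_w (d(x,w) + d(w,y)) K_w = 2n.  Every coefficient is at least d(x,y), so
   min K * d(x,y) <= 2 whenever min K >= 0 (Bonnet-Myers), with equality only
   if every coefficient equals d(x,y), i.e. [x,y] = V.  Hence Bonnet-Myers
   sharpness at a diametral pair (which self-centeredness provides for every
   vertex) forces antipodality.  Conversely, in an antipodal graph the map
   sending a vertex to its antipode is an involution, so every row of D sums
   to n diam / 2: the constant 2/diam solves DK = n1, and the bound above shows
   it has the largest possible minimum. *)
From HB Require Import structures.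
From mathcomp Require Import all_boot all_order all_algebra.
From mathcomp Require Import reals.
From mathcomp Require Import lra zify.
Import Order.TTheory GRing.Theory Num.Theory.
Local Open Scope ring_scope.
Set Implicit Arguments. Unset Strict Implicit.

Section Walks.

Variables (T : finType) (e : rel T).

Lemma walk_kP k x y :
  reflect (exists p : seq T, [/\ size p = k, path e x p & last x p = y])
          (walk_k e k x y).
Proof.
apply: (iffP existsP) => [[p /andP[hp /eqP hl]]|[p [hs hp hl]]].
  by exists (val p); rewrite size_tuple.
have hs' : size p == k by rewrite hs.
by exists (Tuple hs'); rewrite /= hp hl eqxx.
Qed.

Lemma walk_cat a b x y z :
  walk_k e a x y -> walk_k e b y z -> walk_k e (a + b) x z.
Proof.
move=> /walk_kP [p [<- hp <-]] /walk_kP [q [<- hq <-]]; apply/walk_kP.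
by exists (p ++ q); rewrite size_cat cat_path last_cat hp hq.
Qed.

Lemma walk_sym k x y : symmetric e -> walk_k e k x y -> walk_k e k y x.
Proof.
move=> hs /walk_kP [p [<- hp <-]]; apply/walk_kP.
exists (rev (belast x p)); split.
- by rewrite size_rev size_belast.
- by rewrite rev_path; apply: sub_path hp => a b /=; rewrite hs.
- by case: p {hp} => [|a p] //=; rewrite rev_cons last_rcons.
Qed.

Lemma gdist_min k x y :
  walk_k e k x y -> (k < #|T|)%N -> (gdist e x y <= k)%N.
Proof.
move=> hw hk; rewrite /gdist; case: leqP => // hlt.
by have := before_find 0 hlt; rewrite nth_iota // add0n hw.
Qed.

(* Shortening a connecting path to a duplicate-free one shows that [find]
   succeeds inside [iota 0 #|T|]. *)
Lemma gdist_walk x y :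
  graph_connected e -> walk_k e (gdist e x y) x y /\ (gdist e x y < #|T|)%N.
Proof.
move=> hc; have /connectP [p hp ->] := hc x y.
have [p' hp' hu _] := shortenP hp.
have hs : (size p' < #|T|)%N by move/card_uniqP: hu => /= <-; exact: max_card.
have hh : has (fun k => walk_k e k x (last x p')) (iota 0 #|T|).
  by apply/hasP; exists (size p'); rewrite ?mem_iota //; apply/walk_kP; exists p'.
move: (hh); rewrite has_find size_iota => hf; split => //.
by have := nth_find 0 hh; rewrite nth_iota // add0n.
Qed.

Lemma gdist_le_diam x y : (gdist e x y <= diam e)%N.
Proof.
apply: leq_trans (leq_bigmax x) => /=.
exact: (@leq_bigmax _ (fun y => gdist e x y) y).
Qed.

End Walks.

Section Metric.

Variables (T : finType) (e : rel T).
Hypotheses (hs : simple_graph e) (hc : graph_connected e).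

Lemma gdist_sym x y : gdist e x y = gdist e y x.
Proof.
apply/eqP; rewrite eqn_leq.
have [w1 l1] := gdist_walk x y hc; have [w2 l2] := gdist_walk y x hc.
by rewrite !gdist_min // walk_sym //; case: hs.
Qed.

Lemma gdist_triangle x y z : (gdist e x z <= gdist e x y + gdist e y z)%N.
Proof.
have [w1 _] := gdist_walk x y hc; have [w2 _] := gdist_walk y z hc.
have [_ l3] := gdist_walk x z hc.
case: (ltnP (gdist e x y + gdist e y z) #|T|) => h.
  exact: gdist_min (walk_cat w1 w2) h.
exact: leq_trans (ltnW l3) h.
Qed.

Lemma gdist_eq0 x y : gdist e x y = 0%N -> x = y.
Proof.
move=> h0; have [w _] := gdist_walk x y hc; move: w; rewrite h0.
by move=> /walk_kP [[|a p] [] //= _ _ ->].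
Qed.

Lemma diam_gt0 : (1 < #|T|)%N -> (0 < diam e)%N.
Proof.
move=> /card_gt1P [a [b [_ _ hab]]]; rewrite lt0n; apply: contra_neq hab => h0.
by apply: gdist_eq0; apply/eqP; rewrite -leqn0 -h0 gdist_le_diam.
Qed.

Lemma ginterval_full_gdist x y :
  ginterval e x y = [set: T] ->
  forall z, gdist e x y = (gdist e x z + gdist e z y)%N.
Proof.
move=> h z; have : z \in ginterval e x y by rewrite h inE.
by rewrite inE => /eqP.
Qed.

Lemma ginterval_full_sym x y :
  ginterval e x y = [set: T] -> ginterval e y x = [set: T].
Proof.
move=> h; apply/setP => z.
rewrite !inE (gdist_sym y x) (gdist_sym y z) (gdist_sym z x).
by rewrite (ginterval_full_gdist h z) addnC eqxx.
Qed.

Section Antipodal.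

Hypothesis ha : antipodal e.

(* As x, xh lie in [u,uh] and u, uh lie in [x,xh], adding the four interval
   equations gives d(x,xh) = d(u,uh) >= d(u,v). *)
Lemma antipode_gdist x xh :
  ginterval e x xh = [set: T] -> gdist e x xh = diam e.
Proof.
move=> hx; apply/eqP; rewrite eqn_leq gdist_le_diam.
apply/bigmax_leqP => u _; apply/bigmax_leqP => v _.
have [uh hu] := ha u.
have := ginterval_full_gdist hu x; have := ginterval_full_gdist hu xh.
have := ginterval_full_gdist hx u; have := ginterval_full_gdist hx uh.
have := ginterval_full_gdist hu v.
rewrite (gdist_sym u x) (gdist_sym u xh) (gdist_sym uh xh); lia.
Qed.

Lemma antipode_unique x y z :
  ginterval e x y = [set: T] -> ginterval e x z = [set: T] -> y = z.
Proof.
move=> hy hz; apply: gdist_eq0.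
have := ginterval_full_gdist hy z.
by rewrite (gdist_sym z) (antipode_gdist hy) (antipode_gdist hz); lia.
Qed.

(* Reindexing by the antipodal involution pairs d(i,z) with d(i,zh), and
   d(z,i) + d(i,zh) = d(z,zh) = diam. *)
Lemma antipodal_gdist_sum i :
  (2 * \sum_(z : T) gdist e i z = #|T| * diam e)%N.
Proof.
have ex x : exists y, ginterval e x y == [set: T].
  by have [y hy] := ha x; exists y; rewrite hy.
pose s x := xchoose (ex x).
have hsx x : ginterval e x (s x) = [set: T] by apply/eqP; exact: (xchooseP (ex x)).
have sK : involutive s.
  by move=> x; exact: antipode_unique (hsx (s x)) (ginterval_full_sym (hsx x)).
rewrite mul2n -addnn {2}(reindex_inj (inv_inj sK)) -big_split /=.
rewrite -sum_nat_const; apply: eq_bigr => z _.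
by rewrite (gdist_sym i z) -(ginterval_full_gdist (hsx z)) antipode_gdist.
Qed.

End Antipodal.

End Metric.

Section MinValue.

Variables (R : realType) (T : finType).

Lemma minv_le (K : T -> R) z : minv K <= K z.
Proof.
rewrite /minv; case h: (enum T) => [|a l].
  by move: (mem_enum T z); rewrite h.
by rewrite (bigD1 z) //= ge_min lexx.
Qed.

Lemma minv_const (c : R) (z : T) : minv (fun _ : T => c) = c.
Proof.
rewrite /minv; case h: (enum T) => [|a l].
  by move: (mem_enum T z); rewrite h.
by apply: (big_ind (fun v => v = c)) => // u v -> ->; rewrite minxx.
Qed.

End MinValue.

Section Curvature.

Variables (R : realType) (T : finType) (e : rel T).
Hypotheses (hs : simple_graph e) (hc : graph_connected e).
Variable K : T -> R.
Hypothesis hK : curv_solution e K.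

Lemma curv_solution_pair_sum x y :
  \sum_w (gdist e x w + gdist e w y)%:R * K w = #|T|%:R *+ 2.
Proof.
rewrite mulr2n -{1}(hK x) -(hK y) -big_split /=; apply: eq_bigr => w _.
by rewrite natrD mulrDl (gdist_sym hs hc w y).
Qed.

Lemma pair_excess_ge0 x y w :
  0 <= minv K ->
  0 <= (gdist e x w + gdist e w y)%:R * K w - (gdist e x y)%:R * minv K.
Proof.
move=> hm; rewrite subr_ge0.
apply: (@le_trans _ _ ((gdist e x w + gdist e w y)%:R * minv K)).
  by rewrite ler_wpM2r // ler_nat gdist_triangle.
by rewrite ler_wpM2l ?ler0n ?minv_le.
Qed.

Lemma pair_excess_sum x y :
  \sum_w ((gdist e x w + gdist e w y)%:R * K w - (gdist e x y)%:R * minv K)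
  = #|T|%:R * (2 - minv K * (gdist e x y)%:R).
Proof.
by rewrite sumrB curv_solution_pair_sum sumr_const -mulr_natl; lra.
Qed.

Lemma bonnet_myers_pair x y : 0 <= minv K -> minv K * (gdist e x y)%:R <= 2.
Proof.
move=> hm; have : 0 <= #|T|%:R * (2 - minv K * (gdist e x y)%:R) :> R.
  by rewrite -pair_excess_sum sumr_ge0 // => w _; rewrite pair_excess_ge0.
have hT : (0 < #|T|)%N by apply/card_gt0P; exists x.
by rewrite pmulr_rge0 ?ltr0n // subr_ge0.
Qed.

(* Equality forces every summand of the excess sum to vanish; at z this says
   (d(x,z) + d(z,y)) K_z = d(x,y) min K, while K_z >= min K > 0. *)
Lemma bonnet_myers_pair_rigid x y :
  minv K * (gdist e x y)%:R = 2 -> ginterval e x y = [set: T].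
Proof.
move=> heq.
have hm : 0 < minv K by have := ler0n R (gdist e x y); nra.
have hm0 := ltW hm.
have hsum := pair_excess_sum x y; rewrite heq subrr mulr0 in hsum.
apply/setP => z; rewrite !inE; apply/eqP.
have /eqP := psumr_eq0P (fun w _ => pair_excess_ge0 x y w hm0) hsum (i:=z) isT.
rewrite subr_eq0 => /eqP hz.
have : (gdist e x z + gdist e z y)%:R * minv K <= (gdist e x y)%:R * minv K.
  by rewrite -hz ler_wpM2l ?ler0n ?minv_le.
by rewrite ler_pM2r // ler_nat => hle; apply/eqP; rewrite eqn_leq gdist_triangle.
Qed.

End Curvature.

Section AntipodalCurvature.

Variables (R : realType) (T : finType) (e : rel T).
Hypotheses (hs : simple_graph e) (hc : graph_connected e) (ha : antipodal e).
Hypothesis hT : (1 < #|T|)%N.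

Let diamR_gt0 : (0 : R) < (diam e)%:R.
Proof. by rewrite ltr0n diam_gt0. Qed.

Lemma antipodal_const_curv_solution :
  curv_solution e (fun _ : T => (2 / (diam e)%:R : R)).
Proof.
move=> i; rewrite -mulr_suml -natr_sum mulrA -natrM mulnC antipodal_gdist_sum //.
by rewrite natrM mulfK // gt_eqF.
Qed.

Lemma antipodal_minv_le (K' : T -> R) :
  curv_solution e K' -> minv K' <= 2 / (diam e)%:R.
Proof.
move=> hK'; have [hm|hm] := leP (minv K') 0.
  by apply: le_trans hm _; rewrite divr_ge0 // ltW.
have [x _] := card_gt0P (ltnW hT); have [xh hx] := ha x.
rewrite ler_pdivlMr // -(antipode_gdist hs hc ha hx).
exact: bonnet_myers_pair (ltW hm).
Qed.

Lemma antipodal_steinerberger :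
  steinerberger_curvature e (fun _ : T => (2 / (diam e)%:R : R)).
Proof.
split; first exact: antipodal_const_curv_solution.
have [x _] := card_gt0P (ltnW hT).
by move=> K' hK'; rewrite (minv_const _ x); exact: antipodal_minv_le.
Qed.

End AntipodalCurvature.

Theorem mainTheorem9 (R : realType) (T : finType) (e : rel T) :
  simple_graph e -> graph_connected e -> (1 < #|T|)%N ->
  (exists K : T -> R, curv_solution e K) ->
  (antipodal e <-> self_centered e /\ bonnet_myers_sharp R e).
Proof.
move=> hs hc hT _; have [x0 _] := card_gt0P (ltnW hT).
split=> [ha | [hsc [K [[hK _] hm]]] x].
  split=> [x | ]; first by have [xh hx] := ha x; exists xh; apply: antipode_gdist.
  exists (fun _ => 2 / (diam e)%:R); split; first exact: antipodal_steinerberger.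
  exact: minv_const x0.
have [xh hx] := hsc x; exists xh.
apply: (bonnet_myers_pair_rigid hs hc hK).
by rewrite hm hx mulfVK // pnatr_eq0 -lt0n diam_gt0.
Qed.
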